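(* Let $P_1,P_2,P_3$ be autarkic tuples with $P_1\subseteq P_2\subseteq P_3$. If $\mathrm{sep}(P_1)\cap\mathrm{sep}(P_3)\ne\emptyset$, then $\mathrm{sep}(P_2)\cap\mathrm{sep}(P_3)\ne\emptyset$.
   Context: Steiner Forest: finite undirected graph $G=(V,E)$, non-negative edge costs $(c_e)_{e\in E}$, set $\mathcal{D}$ of demand pairs $\{a,b\}\subseteq V$ (partners). For $U\subseteq V$, $\delta(U)$ is the set of edges with exactly one endpoint in $U$; $U$ separates $S$ if $S\cap U\ne\emptyset$ and $S\setminus U\ne\emptyset$; $\mathrm{sep}(U)$ is the set of demand pairs separated by $U$. The $\varepsilon$-extended moat-growing algorithm (fixed $\varepsilon\ge0$): time $t$ increases continuously from $0$ at unit rate; it maintains tight edges $F$ (initially empty), duals $y_S(t)\ge0$ (initially $0$), and budgets of components (initially $0$). $\mathcal{C}^t$ is the family of vertex sets of connected components of $(V,F)$. A component is demand-active if it contains a vertex not connected in $(V,F)$ to some partner; budget-active if not demand-active but with positive budget; active if either; $\mathcal{A}^t$ is the set of active components. Each $y_S$, $S\in\mathcal{A}^t$, grows at unit rate; budgets of demand-active components grow at rate $\varepsilon$ and of budget-active ones decrease at rate $1$; an edge $e$ with $\sum_{S:e\in\delta(S)}y_S(t)=c_e$ becomes tight and is added to $F$; merging components add budgets. $y_S=y_S(\infty)$. Autarkic pair: $P=\{A,B\}$ with $A,B\in\mathrm{supp}(y)$ disjoint, both in $\mathcal{A}^t$ for some $t$, $\mathrm{sep}(A)=\mathrm{sep}(B)\ne\emptyset$;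 $\mathrm{sep}(P)=\mathrm{sep}(A)$. Autarkic triple: $P=\{A_1,A_2,A_3\}$ pairwise disjoint, all in $\mathcal{A}^t$ for some $t$, each $\mathrm{sep}(A_i)\ne\emptyset$, $\mathrm{sep}(A_1\cup A_2\cup A_3)=\emptyset$; $\mathrm{sep}(P)=\bigcup_i\mathrm{sep}(A_i)$. Autarkic tuples are autarkic pairs and triples. For autarkic tuples $P$ (with sets $A_i$) and $Q$ (with sets $B_j$), $P\subseteq Q$ means every $A_i$ is contained in some $B_j$. *)

From mathcomp Require Import all_boot all_order all_algebra.
From mathcomp Require Import reals.
Set Implicit Arguments. Unset Strict Implicit. Unset Printing Implicit Defensive.
Import Order.TTheory GRing.Theory Num.Theory.
Local Open Scope ring_scope.

(* Steiner Forest instance: finite vertex type V, finite edge type E,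
   each edge e joins [src e] and [tgt e] (undirected; parallel edges allowed),
   costs [c], demand pairs [D] (2-element vertex sets). *)

Section SteinerForest.
Context {R : realType} {V E : finType} (src tgt : E -> V) (D : {set {set V}}).

Definition delta (U : {set V}) : {set E} :=
  [set e | (src e \in U) != (tgt e \in U)].

Definition separates (U S : {set V}) : bool :=
  (S :&: U != set0) && (S :\: U != set0).

Definition sep (U : {set V}) : {set {set V}} :=
  [set S in D | separates U S].

Definition adjF (F : {set E}) : rel V := fun u v =>
  [exists e in F, ((src e == u) && (tgt e == v)) || ((src e == v) && (tgt e == u))].

Definition compF (F : {set E}) (v : V) : {set V} := [set u | connect (adjF F) v u].

Definition comps (F : {set E}) : {set {set V}} := [set compF F v | v in V].

Definition demand_active (F : {set E}) (S : {set V}) : bool :=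
  [exists v in S, exists w, ([set v; w] \in D) && ~~ connect (adjF F) v w].

Variables (c : E -> R) (eps : R) (y b : {set V} -> R -> R).
(* y S t : dual variable y_S(t);  b S t : budget of component S at time t *)

Definition load (e : E) (t : R) : R := \sum_(S : {set V} | e \in delta S) y S t.

Definition Ft (t : R) : {set E} := [set e | load e t == c e].

Definition Ct (t : R) : {set {set V}} := comps (Ft t).

Definition budget_active (t : R) (S : {set V}) : bool :=
  ~~ demand_active (Ft t) S && (0 < b S t).

Definition At (t : R) : {set {set V}} :=
  [set S in Ct t | demand_active (Ft t) S || budget_active t S].

Definition brate (t : R) (S : {set V}) : R :=
  if demand_active (Ft t) S then eps else if budget_active t S then -1 else 0.

(* (y, b) is a run of the eps-extended moat-growing algorithm:
   the trajectory is piecewise linear with locally finitely many events;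
   right after any time t the components / active sets do not change,
   every y_S with S active grows at unit rate, the budgets change at the
   prescribed rates; just before any time t > 0 the components / active sets
   are constant, and the budget of a component S at t is the sum of the
   (left-limit) budgets of the components it was merged from. *)
Definition is_run : Prop :=
  (forall S, y S 0 = 0) /\
  (forall S, S \in Ct 0 -> b S 0 = 0) /\
  (forall t, 0 <= t -> exists2 d, 0 < d & forall h, 0 < h < d ->
     [/\ Ct (t + h) = Ct t, At (t + h) = At t,
         (forall S, y S (t + h) = y S t + (if S \in At t then h else 0)) &
         (forall S, S \in Ct t -> b S (t + h) = b S t + h * brate t S)]) /\
  (forall t, 0 < t -> exists2 d, 0 < d <= t & forall h h', 0 < h < d -> 0 < h' < d ->
     [/\ Ct (t - h) = Ct (t - h'), At (t - h) = At (t - h'),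
         (forall S, y S (t - h) = y S t - (if S \in At (t - h) then h else 0)) &
         (forall S, S \in Ct t ->
            b S t = \sum_(S' in Ct (t - h) | S' \subset S)
                      (b S' (t - h) + h * brate (t - h) S'))]).

(* supp(y): sets S with y_S(infinity) > 0; since y_S is nondecreasing this
   means y_S(t) > 0 for some time t *)
Definition in_supp (S : {set V}) : Prop := exists t, 0 < y S t.

Definition autarkic_pair (P : {set {set V}}) : Prop :=
  exists A B : {set V}, [/\ P = [set A; B], in_supp A /\ in_supp B,
    (A :&: B == set0),
    (exists t, 0 <= t /\ A \in At t /\ B \in At t) &
    sep A = sep B /\ sep A != set0].

Definition autarkic_triple (P : {set {set V}}) : Prop :=
  exists A1 A2 A3 : {set V}, [/\ P = [set A1; A2; A3],
    [/\ (A1 :&: A2 == set0), (A1 :&: A3 == set0) & (A2 :&: A3 == set0)],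
    (exists t, 0 <= t /\ [/\ A1 \in At t, A2 \in At t & A3 \in At t]),
    [/\ sep A1 != set0, sep A2 != set0 & sep A3 != set0] &
    sep (A1 :|: A2 :|: A3) = set0].

Definition autarkic_tuple (P : {set {set V}}) : Prop :=
  autarkic_pair P \/ autarkic_triple P.

End SteinerForest.

(* sep(P) of a tuple: union of sep(A_i) (for a pair, sep(A) = sep(B)) *)
Definition sepT {V : finType} (D : {set {set V}}) (P : {set {set V}}) : {set {set V}} :=
  \bigcup_(A in P) sep D A.

Definition tuple_sub {V : finType} (P Q : {set {set V}}) : Prop :=
  forall A, A \in P -> exists2 B, B \in Q & A \subset B.

(* Only the pairwise disjointness of the sets of P3 matters.  If a demand pair
   S is separated by A in P1 and by C in P3, choose A ⊆ B ⊆ X with B in P2 and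
   X in P3.  Either X = C, or X is disjoint from C and so misses S ∩ C; either
   way X separates S, and then so does B, which still meets S inside A. *)
From mathcomp Require Import all_boot all_order all_algebra.
From mathcomp Require Import reals.
Set Implicit Arguments. Unset Strict Implicit. Unset Printing Implicit Defensive.
Import Order.TTheory GRing.Theory Num.Theory.
Local Open Scope ring_scope.

Section Separation.
Context {V : finType}.
Implicit Types (A B C X S : {set V}) (P : {set {set V}}).

Lemma separatesS A B S :
  A \subset B -> S :&: A != set0 -> separates B S -> separates A S.
Proof.
move=> sAB SA /andP[_ SdB]; rewrite /separates SA /=.
by apply: subset_neq0 SdB; apply: setDS.
Qed.

Lemma separates_disjoint X C S :
  [disjoint X & C] -> S :&: X != set0 -> S :&: C != set0 -> separates X S.
Proof.
move=> dXC SX SC; rewrite /separates SX /=; apply: subset_neq0 SC.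
apply/subsetP=> x /setIP[xS xC]; rewrite inE xS andbT.
by apply: contraTN xC => xX; rewrite (disjointFr dXC xX).
Qed.

Lemma trivIset2 A B : [disjoint A & B] -> trivIset [set A; B].
Proof.
move=> dAB; apply/trivIsetP=> X Y; rewrite !inE.
by do 2![case/orP=> /eqP->]; rewrite ?eqxx // disjoint_sym.
Qed.

Lemma trivIset3 A1 A2 A3 :
  [disjoint A1 & A2] -> [disjoint A1 & A3] -> [disjoint A2 & A3] ->
  trivIset [set A1; A2; A3].
Proof.
move=> d12 d13 d23; apply/trivIsetP=> X Y; rewrite !inE.
by do 2![case/orP=> [/orP[]|] /eqP->]; rewrite ?eqxx // disjoint_sym.
Qed.

Variable D : {set {set V}}.

Lemma sep_trivIset P C X S :
  trivIset P -> C \in P -> X \in P ->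
  S \in sep D C -> S :&: X != set0 -> S \in sep D X.
Proof.
move=> /trivIsetP tiP CP XP; rewrite !inE => /andP[SD sepCS] SX.
rewrite SD /=; have [-> // | neXC] := eqVneq X C.
by apply: separates_disjoint (tiP _ _ XP CP neXC) SX _; case/andP: sepCS.
Qed.

Lemma sepT_tuple_sub P1 P2 P3 :
  trivIset P3 -> tuple_sub P1 P2 -> tuple_sub P2 P3 ->
  sepT D P1 :&: sepT D P3 \subset sepT D P2 :&: sepT D P3.
Proof.
move=> tiP3 s12 s23; apply/subsetP=> S /setIP[/bigcupP[A AP1 SA] SP3].
rewrite inE SP3 andbT.
have [B BP2 sAB] := s12 A AP1; have [X XP3 sBX] := s23 B BP2.
have [C CP3 SC] := bigcupP SP3.
have /andP[SD sepAS] : (S \in D) && separates A S by rewrite inE in SA.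
have SnA : S :&: A != set0 by case/andP: sepAS.
have SnB : S :&: B != set0 by apply: subset_neq0 SnA; apply: setIS.
have SnX : S :&: X != set0 by apply: subset_neq0 SnB; apply: setIS.
have /setIdP[_ sepXS] := sep_trivIset tiP3 CP3 XP3 SC SnX.
by apply/bigcupP; exists B; rewrite // inE SD (separatesS sBX SnB sepXS).
Qed.

End Separation.

Lemma autarkic_tuple_trivIset (R : realType) (V E : finType) (src tgt : E -> V)
  (D : {set {set V}}) (c : E -> R) (y b : {set V} -> R -> R) P :
  autarkic_tuple src tgt D c y b P -> trivIset P.
Proof.
case=> [[A [B [-> _ dAB _ _]]] | [A1 [A2 [A3 [-> [d12 d13 d23] _ _ _]]]]].
  by apply: trivIset2; rewrite -setI_eq0.
by apply: trivIset3; rewrite -setI_eq0.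
Qed.

Theorem lemma4p11 (R : realType) (V E : finType) (src tgt : E -> V)
  (c : E -> R) (D : {set {set V}}) (eps : R) (y b : {set V} -> R -> R) :
  (forall e, 0 <= c e) ->
  (forall S, S \in D -> #|S| = 2%N) ->
  0 <= eps ->
  is_run src tgt D c eps y b ->
  forall P1 P2 P3 : {set {set V}},
  autarkic_tuple src tgt D c y b P1 ->
  autarkic_tuple src tgt D c y b P2 ->
  autarkic_tuple src tgt D c y b P3 ->
  tuple_sub P1 P2 -> tuple_sub P2 P3 ->
  sepT D P1 :&: sepT D P3 != set0 ->
  sepT D P2 :&: sepT D P3 != set0.
Proof.
move=> _ _ _ _ P1 P2 P3 _ _ autP3 s12 s23.
apply: subset_neq0; apply: sepT_tuple_sub s12 s23.
exact: autarkic_tuple_trivIset autP3.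
Qed.
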